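(* Let $\mu>\nu>0$ and let $(Y_i)_{i\ge0},(e_i)_{i\ge0}$ be sequences with values in $[0,1]$, with $e_0=1/2$, satisfying the decoy-state constraints (DS) for some reals $Q_\mu,Q_\nu,E_\mu,E_\nu$. Define $$Y_1^*=\frac{\mu^2Q_\nu e^{\nu}-\nu^2Q_\mu e^{\mu}}{\mu\nu(\mu-\nu)},\qquad e_1^*=\frac{\mu^2E_\nu Q_\nu e^{\nu}-\nu^2E_\mu Q_\mu e^{\mu}}{\mu^2Q_\nu e^{\nu}-\nu^2Q_\mu e^{\mu}},\qquad e_2^*Y_2^*:=\frac{2\big(\nu E_\mu Q_\mu e^{\mu}-\mu E_\nu Q_\nu e^{\nu}\big)}{\mu\nu(\mu-\nu)},$$ (these are the values of $Y_1,e_1$ and $e_2Y_2$ solving the four equations of (DS) when $Y_0=0$ and $Y_i=0$ for all $i\ge3$), assuming $\mu^2Q_\nu e^{\nu}\ne\nu^2Q_\mu e^{\mu}$. Assume $0<e_1^*\le 1/2$, and with $a=1+\log_2(1-e_1^* )$, $b=\log_2(1-e_1^* )-\log_2 e_1^*$ assume $(a-b)\frac{\nu}{\mu+\nu}+(b-2a)\ge0$. Then $$Y_1\big[1-h(e_1)\big]\ \ge\ Y_1^*\big[1-h(e_1^* )\big]+\frac{\nu}{2}\big(1+\log_2 e_1^*\big)\,e_2^*Y_2^* .$$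
   Context: $h(x)=-x\log_2 x-(1-x)\log_2(1-x)$ is the binary entropy function on $[0,1]$ (with $0\log_2 0=0$). For reals $\mu>\nu>0$, the decoy-state constraints (DS) on sequences $(Y_i)_{i\ge0},(e_i)_{i\ge0}$ with values in $[0,1]$ are $$Q_\mu=\sum_{i=0}^\infty \frac{\mu^i e^{-\mu}}{i!}Y_i,\quad Q_\nu=\sum_{i=0}^\infty \frac{\nu^i e^{-\nu}}{i!}Y_i,\quad E_\mu Q_\mu=\sum_{i=0}^\infty \frac{\mu^i e^{-\mu}}{i!}Y_ie_i,\quad E_\nu Q_\nu=\sum_{i=0}^\infty \frac{\nu^i e^{-\nu}}{i!}Y_ie_i.$$ *)

From Stdlib Require Import Reals.
From Coquelicot Require Import Coquelicot.
Open Scope R_scope.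

Definition log2 (x : R) : R := ln x / ln 2.

Definition xlog2x (x : R) : R := if Req_EM_T x 0 then 0 else x * log2 x.

Definition h (x : R) : R := - xlog2x x - xlog2x (1 - x).

Definition poisson (mu : R) (i : nat) : R := mu ^ i * exp (- mu) / INR (Factorial.fact i).

Definition Y1star (mu nu Qmu Qnu : R) : R :=
  (mu ^ 2 * Qnu * exp nu - nu ^ 2 * Qmu * exp mu) / (mu * nu * (mu - nu)).

Definition e1star (mu nu Qmu Qnu Emu Enu : R) : R :=
  (mu ^ 2 * Enu * Qnu * exp nu - nu ^ 2 * Emu * Qmu * exp mu)
  / (mu ^ 2 * Qnu * exp nu - nu ^ 2 * Qmu * exp mu).

Definition e2Y2star (mu nu Qmu Qnu Emu Enu : R) : R :=
  2 * (nu * Emu * Qmu * exp mu - mu * Enu * Qnu * exp nu) / (mu * nu * (mu - nu)).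

(* The function 1 - h is convex, so it lies above its tangent line a - b x at e_1^*; hence
   Y_1 (1 - h(e_1)) >= a Y_1 - b Y_1 e_1.  The right-hand side of the theorem is a fixed linear
   combination of Q_mu, Q_nu, E_mu Q_mu, E_nu Q_nu, i.e. (by (DS)) the sum of a series whose
   i-th term is a multiple of Y_i and Y_i e_i.  By construction of the starred quantities the
   term i = 1 is exactly a Y_1 - b Y_1 e_1, and the hypotheses e_1^* <= 1/2 and
   (a - b) nu/(mu + nu) + (b - 2a) >= 0 make every other term nonpositive. *)

From Stdlib Require Import Reals Lra Lia.
From Coquelicot Require Import Coquelicot.
Open Scope R_scope.

Lemma ln_le_sub1 x : 0 < x -> ln x <= x - 1.
Proof. intros Hx. generalize (exp_ineq1_le (ln x)). rewrite exp_ln; lra. Qed.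

Lemma ln2_pos : 0 < ln 2.
Proof. generalize ln_lt_2; lra. Qed.

Lemma log2_le x y : 0 < x -> x <= y -> log2 x <= log2 y.
Proof.
  intros Hx Hxy. unfold log2, Rdiv.
  apply Rmult_le_compat_r; [left; apply Rinv_0_lt_compat, ln2_pos | now apply ln_le].
Qed.

Lemma log2_half : log2 (1 / 2) = -1.
Proof.
  unfold log2. rewrite Rdiv_1_l, ln_Rinv by lra.
  field. apply Rgt_not_eq, ln2_pos.
Qed.

Lemma one_add_log2_nonneg x : 1 / 2 <= x -> 0 <= 1 + log2 x.
Proof. intros Hx. generalize (log2_le (1 / 2) x ltac:(lra) Hx). rewrite log2_half. lra. Qed.

Lemma one_add_log2_nonpos x : 0 < x <= 1 / 2 -> 1 + log2 x <= 0.
Proof. intros Hx. generalize (log2_le x (1 / 2) ltac:(lra) ltac:(lra)). rewrite log2_half. lra. Qed.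

Lemma neg_xlog2x_le x e : 0 <= x -> 0 < e ->
  - xlog2x x <= - x * log2 e + (e - x) / ln 2.
Proof.
  intros Hx He. assert (L := ln2_pos). unfold xlog2x, log2.
  destruct (Req_EM_T x 0) as [->|Hx0].
  - assert (0 <= e / ln 2) by (apply Rdiv_le_0_compat; lra). lra.
  - assert (Hlog : ln (e / x) <= e / x - 1) by (apply ln_le_sub1, Rdiv_lt_0_compat; lra).
    rewrite ln_div in Hlog by lra.
    assert (Hmul : x * (ln e - ln x) <= e - x).
    { replace (e - x) with (x * (e / x - 1)) by (field; lra).
      apply Rmult_le_compat_l; lra. }
    apply Rmult_le_compat_r with (r := / ln 2) in Hmul; [|left; now apply Rinv_0_lt_compat].
    unfold Rdiv. nra.
Qed.

Lemma h_le_cross_entropy x e : 0 <= x <= 1 -> 0 < e < 1 ->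
  h x <= - x * log2 e - (1 - x) * log2 (1 - e).
Proof.
  intros Hx He. unfold h.
  generalize (neg_xlog2x_le x e ltac:(lra) ltac:(lra)),
    (neg_xlog2x_le (1 - x) (1 - e) ltac:(lra) ltac:(lra)).
  replace ((e - x) / ln 2) with (- ((1 - e - (1 - x)) / ln 2)) by (field; apply Rgt_not_eq, ln2_pos).
  lra.
Qed.

Lemma h_interior x : 0 < x < 1 -> h x = - x * log2 x - (1 - x) * log2 (1 - x).
Proof.
  intros Hx. unfold h, xlog2x.
  destruct (Req_EM_T x 0); [lra|]. destruct (Req_EM_T (1 - x) 0); [lra|]. ring.
Qed.

Lemma one_sub_h_ge_tangent x e : 0 <= x <= 1 -> 0 < e < 1 ->
  (1 + log2 (1 - e)) - (log2 (1 - e) - log2 e) * x <= 1 - h x.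
Proof. intros Hx He. generalize (h_le_cross_entropy x e Hx He). lra. Qed.

Lemma sum_n_le_term (u : nat -> R) k : (forall i, i <> k -> u i <= 0) ->
  forall n, sum_n u n <= if (k <=? n)%nat then u k else 0.
Proof.
  intros Hu. induction n as [|n IH].
  - rewrite sum_O. destruct k; simpl; [lra | apply Hu; lia].
  - rewrite sum_Sn. unfold plus; simpl.
    destruct (Nat.leb_spec k n), (Nat.leb_spec k (S n)); try lia.
    + assert (u (S n) <= 0) by (apply Hu; lia). lra.
    + replace (S n) with k by lia. lra.
    + assert (u (S n) <= 0) by (apply Hu; lia). lra.
Qed.

Lemma is_series_le_term (u : nat -> R) k l : (forall i, i <> k -> u i <= 0) ->
  is_series u l -> l <= u k.
Proof.
  intros Hu Hl.
  apply (is_lim_seq_le_loc (sum_n u) (fun _ => u k) l (u k)); [|exact Hl|apply is_lim_seq_const].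
  exists k. intros n Hn. generalize (sum_n_le_term u k Hu n).
  destruct (Nat.leb_spec k n); [trivial | lia].
Qed.

Section TangentCombination.

Variables mu nu a b : R.
Hypotheses (Hnu : 0 < nu) (Hmunu : nu < mu) (Ha : 0 <= a) (Hba : a - b <= 0).

(* [a Y - b Y e], rewritten as [Y (a (1 - e) + (a - b) e)] and multiplied by the common
   denominator [mu nu (mu - nu) i!] of the combination below. *)
Definition decoy_weight (i : nat) (y z : R) : R :=
  y * ((mu ^ 2 * nu ^ i - nu ^ 2 * mu ^ i) * a * (1 - z)
       + (a - b) * mu * nu ^ i * (mu - nu) * z).

Lemma decoy_weight_1 y z : decoy_weight 1 y z = mu * nu * (mu - nu) * (a * y - b * y * z).
Proof. unfold decoy_weight. ring. Qed.

Lemma decoy_weight_0 y :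
  decoy_weight 0 y (1 / 2) = - ((mu - nu) * y / 2) * ((a - b) * nu + (b - 2 * a) * (mu + nu)).
Proof. unfold decoy_weight. field. Qed.

Lemma decoy_weight_nonpos i y z : (2 <= i)%nat -> 0 <= y -> 0 <= z <= 1 ->
  decoy_weight i y z <= 0.
Proof.
  intros Hi Hy Hz. unfold decoy_weight.
  replace i with (2 + (i - 2))%nat by lia. set (k := (i - 2)%nat). rewrite !pow_add.
  apply Rmult_le_0_l; [exact Hy|].
  assert (Hpow : nu ^ k <= mu ^ k) by (apply pow_incr; lra).
  assert (0 <= mu ^ 2 * nu ^ 2 * (mu ^ k - nu ^ k) * (a * (1 - z)))
    by (repeat apply Rmult_le_pos; try apply pow_le; lra).
  assert (0 <= mu * nu ^ 2 * (mu - nu) * nu ^ k * ((b - a) * z))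
    by (repeat apply Rmult_le_pos; try apply pow_le; lra).
  enough (Hsplit : (mu ^ 2 * (nu ^ 2 * nu ^ k) - nu ^ 2 * (mu ^ 2 * mu ^ k)) * a * (1 - z)
                   + (a - b) * mu * (nu ^ 2 * nu ^ k) * (mu - nu) * z
                   = - (mu ^ 2 * nu ^ 2 * (mu ^ k - nu ^ k) * (a * (1 - z))
                        + mu * nu ^ 2 * (mu - nu) * nu ^ k * ((b - a) * z))) by lra.
  ring.
Qed.

Definition decoy_comb (Y e : nat -> R) (i : nat) : R :=
  / (mu * nu * (mu - nu)) *
  (- a * nu ^ 2 * exp mu * (poisson mu i * Y i) + a * mu ^ 2 * exp nu * (poisson nu i * Y i)
   + a * nu ^ 2 * exp mu * (poisson mu i * Y i * e i)
   - (b * mu ^ 2 + (a - b) * mu * nu) * exp nu * (poisson nu i * Y i * e i)).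

Lemma decoy_comb_weight (Y e : nat -> R) i :
  decoy_comb Y e i = decoy_weight i (Y i) (e i) / (mu * nu * (mu - nu) * INR (Factorial.fact i)).
Proof.
  unfold decoy_comb, decoy_weight, poisson. rewrite !exp_Ropp.
  assert (exp mu <> 0) by apply Rgt_not_eq, exp_pos.
  assert (exp nu <> 0) by apply Rgt_not_eq, exp_pos.
  field. repeat split; try lra. apply INR_fact_neq_0.
Qed.

Lemma is_series_decoy_comb (Y e : nat -> R) (Qmu Qnu Emu Enu : R) :
  is_series (fun i => poisson mu i * Y i) Qmu ->
  is_series (fun i => poisson nu i * Y i) Qnu ->
  is_series (fun i => poisson mu i * Y i * e i) (Emu * Qmu) ->
  is_series (fun i => poisson nu i * Y i * e i) (Enu * Qnu) ->
  mu ^ 2 * Qnu * exp nu <> nu ^ 2 * Qmu * exp mu ->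
  is_series (decoy_comb Y e)
    (Y1star mu nu Qmu Qnu * (a - b * e1star mu nu Qmu Qnu Emu Enu)
     + nu / 2 * (a - b) * e2Y2star mu nu Qmu Qnu Emu Enu).
Proof.
  intros DSQmu DSQnu DSEmu DSEnu Hden.
  replace (Y1star _ _ _ _ * _ + _) with
    (/ (mu * nu * (mu - nu)) *
     (- a * nu ^ 2 * exp mu * Qmu + a * mu ^ 2 * exp nu * Qnu + a * nu ^ 2 * exp mu * (Emu * Qmu)
      - (b * mu ^ 2 + (a - b) * mu * nu) * exp nu * (Enu * Qnu)))
    by (unfold Y1star, e1star, e2Y2star; field; repeat split; lra).
  exact (is_series_scal_l _ _ _
    (is_series_minus _ _ _ _
       (is_series_plus _ _ _ _
          (is_series_plus _ _ _ _ (is_series_scal_l _ _ _ DSQmu) (is_series_scal_l _ _ _ DSQnu))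
          (is_series_scal_l _ _ _ DSEmu))
       (is_series_scal_l _ _ _ DSEnu))).
Qed.

Lemma decoy_comb_1 (Y e : nat -> R) : decoy_comb Y e 1 = a * Y 1%nat - b * Y 1%nat * e 1%nat.
Proof.
  rewrite decoy_comb_weight, decoy_weight_1. simpl.
  field. repeat split; lra.
Qed.

Lemma decoy_comb_nonpos (Y e : nat -> R) i :
  (forall j, 0 <= Y j) -> (forall j, 0 <= e j <= 1) -> e 0%nat = 1 / 2 ->
  0 <= (a - b) * nu + (b - 2 * a) * (mu + nu) ->
  i <> 1%nat -> decoy_comb Y e i <= 0.
Proof.
  intros HY He He0 HK Hi.
  rewrite decoy_comb_weight. unfold Rdiv. apply Rmult_le_0_r.
  2: { left. apply Rinv_0_lt_compat, Rmult_lt_0_compat; [|apply INR_fact_lt_0].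
       apply Rmult_lt_0_compat; [apply Rmult_lt_0_compat|]; lra. }
  destruct i as [|[|i]]; [|easy|].
  - rewrite He0, decoy_weight_0.
    apply Rmult_le_0_r; [|exact HK].
    assert (0 <= (mu - nu) * Y 0%nat) by (apply Rmult_le_pos; [lra|apply HY]). lra.
  - apply decoy_weight_nonpos; [lia | apply HY | apply He].
Qed.

End TangentCombination.

Theorem theorem2 (mu nu Qmu Qnu Emu Enu : R) (Y e : nat -> R)
  (Hnu : 0 < nu) (Hmunu : nu < mu)
  (HY : forall i, 0 <= Y i <= 1) (He : forall i, 0 <= e i <= 1)
  (He0 : e 0%nat = 1 / 2)
  (DSQmu : is_series (fun i => poisson mu i * Y i) Qmu)
  (DSQnu : is_series (fun i => poisson nu i * Y i) Qnu)
  (DSEmu : is_series (fun i => poisson mu i * Y i * e i) (Emu * Qmu))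
  (DSEnu : is_series (fun i => poisson nu i * Y i * e i) (Enu * Qnu))
  (Hden : mu ^ 2 * Qnu * exp nu <> nu ^ 2 * Qmu * exp mu)
  (He1 : 0 < e1star mu nu Qmu Qnu Emu Enu <= 1 / 2)
  (Hab : let a := 1 + log2 (1 - e1star mu nu Qmu Qnu Emu Enu) in
         let b := log2 (1 - e1star mu nu Qmu Qnu Emu Enu)
                  - log2 (e1star mu nu Qmu Qnu Emu Enu) in
         (a - b) * (nu / (mu + nu)) + (b - 2 * a) >= 0) :
  Y 1%nat * (1 - h (e 1%nat)) >=
    Y1star mu nu Qmu Qnu * (1 - h (e1star mu nu Qmu Qnu Emu Enu))
    + nu / 2 * (1 + log2 (e1star mu nu Qmu Qnu Emu Enu))
      * e2Y2star mu nu Qmu Qnu Emu Enu.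
Proof.
  cbv zeta in Hab.
  set (E := e1star mu nu Qmu Qnu Emu Enu) in *.
  set (a := 1 + log2 (1 - E)) in *.
  set (b := log2 (1 - E) - log2 E) in *.
  assert (Ha : 0 <= a) by (apply one_add_log2_nonneg; lra).
  assert (Hba : a - b <= 0).
  { generalize (one_add_log2_nonpos E He1). unfold a, b. lra. }
  assert (HK : 0 <= (a - b) * nu + (b - 2 * a) * (mu + nu)).
  { replace ((a - b) * nu + (b - 2 * a) * (mu + nu))
      with (((a - b) * (nu / (mu + nu)) + (b - 2 * a)) * (mu + nu)) by (field; lra).
    apply Rmult_le_pos; lra. }
  assert (Htangent : a * Y 1%nat - b * Y 1%nat * e 1%nat <= Y 1%nat * (1 - h (e 1%nat))).
  { replace (a * Y 1%nat - b * Y 1%nat * e 1%nat) with (Y 1%nat * (a - b * e 1%nat)) by ring.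
    apply Rmult_le_compat_l; [apply HY | apply one_sub_h_ge_tangent; [apply He | lra]]. }
  replace (Y1star mu nu Qmu Qnu * (1 - h E) + nu / 2 * (1 + log2 E) * e2Y2star mu nu Qmu Qnu Emu Enu)
    with (Y1star mu nu Qmu Qnu * (a - b * E) + nu / 2 * (a - b) * e2Y2star mu nu Qmu Qnu Emu Enu)
    by (rewrite h_interior by lra; unfold a, b; ring).
  apply Rle_ge. eapply Rle_trans; [|exact Htangent].
  rewrite <- (decoy_comb_1 mu nu a b Hnu Hmunu Y e).
  apply is_series_le_term.
  - intros i Hi. apply (decoy_comb_nonpos mu nu a b); auto; apply HY.
  - now apply is_series_decoy_comb.
Qed.
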